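(* Let $\Lambda$ be a left cancellative small category which is (isomorphic to) a subcategory of a groupoid. Then the groupoid $G_2(\Lambda)$ is Hausdorff.
   Context: A left cancellative small category (LCSC) is a small category $\Lambda$ such that $\alpha\beta=\alpha\gamma$ implies $\beta=\gamma$. Composition $\alpha\beta$ is defined when $s(\alpha)=r(\beta)$; $\Lambda^0$ is the set of objects (identity morphisms); $v\Lambda=\{\alpha:r(\alpha)=v\}$; $\alpha\Lambda=\{\alpha\beta:r(\beta)=s(\alpha)\}$. For $\alpha\in\Lambda$, $\tau^\alpha(\beta)=\alpha\beta$ on $s(\alpha)\Lambda$ and $\sigma^\alpha:\alpha\Lambda\to s(\alpha)\Lambda$ is its inverse. A zigzag is a tuple $\zeta=(\alpha_1,\beta_1,\dots,\alpha_n,\beta_n)$ with $r(\alpha_i)=r(\beta_i)$ and $s(\alpha_{i+1})=s(\beta_i)$; $\mathcal Z$ is the set of zigzags, $s(\zeta)=s(\beta_n)$, $r(\zeta)=s(\alpha_1)$, $\mathcal Zv=\{\zeta:s(\zeta)=v\}$, $\overline\zeta=(\beta_n,\alpha_n,\dots,\beta_1,\alpha_1)$, composable zigzags concatenate as tuples. The zigzag map $\varphi_\zeta=\sigma^{\alpha_1}\circ\tau^{\beta_1}\circ\cdots\circ\sigma^{\alpha_n}\circ\tau^{\beta_n}$ (partial injective map) has domain $A(\zeta)\subseteq s(\zeta)\Lambda$ and range $A(\overline\zeta)$. $\mathcal D^{(0)}_v$ is the set of nonempty $A(\zeta)$, $\zeta\in\mathcal Zv$; $\mathcal A_v$ is the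 ring of subsets of $v\Lambda$ generated by $\mathcal D^{(0)}_v$. $X_v$ is the set of ultrafilters of $\mathcal A_v$ ($\mathcal U_x$ denoting the ultrafilter $x$), with compact open basic sets $\widehat E=\{x:E\in\mathcal U_x\}$, $E\in\mathcal A_v$; $X=\bigsqcup_vX_v$, $r(x)=v$ for $x\in X_v$. For $x\in\widehat{A(\zeta)}$, $\Phi_\zeta(x)$ is the ultrafilter of $\mathcal A_{r(\zeta)}$ generated by $\{\varphi_\zeta(E\cap A(\zeta)):E\in\mathcal U_x\}$. On $\mathcal Z*X=\{(\zeta,x):s(\zeta)=r(x),\ x\in\widehat{A(\zeta)}\}$, $(\zeta,x)\sim_2(\zeta',x')$ iff $x=x'$ and $\varphi_\zeta|_E=\varphi_{\zeta'}|_E$ for some $E\in\mathcal U_x$. $G_2(\Lambda)=(\mathcal Z*X)/\sim_2$, with classes $[\zeta,x]$, product $[\zeta,\Phi_{\zeta'}(x)][\zeta',x]=[\zeta\zeta',x]$, inverse $[\zeta,x]^{-1}=[\overline\zeta,\Phi_\zeta(x)]$, and topology generated by the basis $[\zeta,E]=\{[\zeta,x]:x\in\widehat E\}$, $E\in\mathcal A_{s(\zeta)}$, $E\subseteq A(\zeta)$; it is an ample étale groupoid. *)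

From Stdlib Require Import List.
Import ListNotations.
Set Implicit Arguments.

(** Composition [comp a b] = "a b" is total
    as a function but only meaningful when [src a = rng b]. *)
Record LCSC := {
  Obj : Type;
  Mor : Type;
  src : Mor -> Obj;
  rng : Mor -> Obj;
  idm : Obj -> Mor;
  comp : Mor -> Mor -> Mor;
  src_idm : forall v, src (idm v) = v;
  rng_idm : forall v, rng (idm v) = v;
  src_comp : forall a b, src a = rng b -> src (comp a b) = src b;
  rng_comp : forall a b, src a = rng b -> rng (comp a b) = rng a;
  comp_idl : forall a, comp (idm (rng a)) a = a;
  comp_idr : forall a, comp a (idm (src a)) = a;
  comp_assoc : forall a b c, src a = rng b -> src b = rng c ->
      comp (comp a b) c = comp a (comp b c);
  left_cancel : forall a b c, src a = rng b -> src a = rng c ->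
      comp a b = comp a c -> b = c
}.

Arguments src {_} _.
Arguments rng {_} _.
Arguments idm {_} _.
Arguments comp {_} _ _.

Record Groupoid := {
  GObj : Type;
  GMor : Type;
  gsrc : GMor -> GObj;
  grng : GMor -> GObj;
  gidm : GObj -> GMor;
  gcomp : GMor -> GMor -> GMor;
  ginv : GMor -> GMor;
  gsrc_idm : forall v, gsrc (gidm v) = v;
  grng_idm : forall v, grng (gidm v) = v;
  gsrc_comp : forall a b, gsrc a = grng b -> gsrc (gcomp a b) = gsrc b;
  grng_comp : forall a b, gsrc a = grng b -> grng (gcomp a b) = grng a;
  gcomp_idl : forall a, gcomp (gidm (grng a)) a = a;
  gcomp_idr : forall a, gcomp a (gidm (gsrc a)) = a;
  gcomp_assoc : forall a b c, gsrc a = grng b -> gsrc b = grng c ->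
      gcomp (gcomp a b) c = gcomp a (gcomp b c);
  gsrc_inv : forall a, gsrc (ginv a) = grng a;
  grng_inv : forall a, grng (ginv a) = gsrc a;
  ginv_l : forall a, gcomp (ginv a) a = gidm (gsrc a);
  ginv_r : forall a, gcomp a (ginv a) = gidm (grng a)
}.

Arguments gsrc {_} _.
Arguments grng {_} _.
Arguments gidm {_} _.
Arguments gcomp {_} _ _.

(** [L] is isomorphic to a subcategory of a groupoid: there is a functor
    into a groupoid which is injective on objects and on morphisms. *)
Definition embeds_in_groupoid (L : LCSC) : Prop :=
  exists (G : Groupoid) (F0 : Obj L -> GObj G) (F1 : Mor L -> GMor G),
    (forall a, gsrc (F1 a) = F0 (src a)) /\
    (forall a, grng (F1 a) = F0 (rng a)) /\
    (forall v, F1 (idm v) = gidm (F0 v)) /\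
    (forall a b, src a = rng b -> F1 (comp a b) = gcomp (F1 a) (F1 b)) /\
    (forall v w, F0 v = F0 w -> v = w) /\
    (forall a b, F1 a = F1 b -> a = b).

Section Zigzags.
Variable L : LCSC.
Notation Mor := (Mor L).
Notation Obj := (Obj L).

(** [Zig z u w]: z = (α1,β1,...,αn,βn), n >= 1, is a zigzag with
    r(z) = s(α1) = u and s(z) = s(βn) = w. *)
Inductive Zig : list (Mor * Mor) -> Obj -> Obj -> Prop :=
| zig1 : forall a b, rng a = rng b -> Zig [(a, b)] (src a) (src b)
| zigS : forall a b z w, rng a = rng b -> Zig z (src b) w ->
    Zig ((a, b) :: z) (src a) w.

(** Graph of the zigzag map φ_z = σ^{α1} ∘ τ^{β1} ∘ ... ∘ σ^{αn} ∘ τ^{βn}: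
    [Phi z g d] means φ_z(g) = d. *)
Fixpoint Phi (z : list (Mor * Mor)) (g d : Mor) : Prop :=
  match z with
  | [] => g = d
  | (a, b) :: z' => exists e, Phi z' g e /\ src b = rng e /\
                      src a = rng d /\ comp a d = comp b e
  end.

Definition Adom (z : list (Mor * Mor)) : Mor -> Prop :=
  fun g => exists d, Phi z g d.

(** The ring of subsets of vΛ generated by D^(0)_v. *)
Inductive inA (v : Obj) : (Mor -> Prop) -> Prop :=
| inA_gen : forall z u, Zig z u v -> (exists g, Adom z g) -> inA v (Adom z)
| inA_union : forall E F, inA v E -> inA v F -> inA v (fun g => E g \/ F g)
| inA_diff : forall E F, inA v E -> inA v F -> inA v (fun g => E g /\ ~ F g).

Definition is_filter (v : Obj) (U : (Mor -> Prop) -> Prop) : Prop :=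
  (forall E, U E -> inA v E) /\
  (exists E, U E) /\
  (forall E, U E -> exists g, E g) /\
  (forall E F, U E -> U F -> U (fun g => E g /\ F g)) /\
  (forall E F, U E -> inA v F -> (forall g, E g -> F g) -> U F).

Definition is_ultrafilter (v : Obj) (U : (Mor -> Prop) -> Prop) : Prop :=
  is_filter v U /\
  (forall U', is_filter v U' -> (forall E, U E -> U' E) ->
     forall E, U' E -> U E).

End Zigzags.

Arguments Zig {L} _ _ _.
Arguments Phi {L} _ _ _.
Arguments Adom {L} _ _.
Arguments inA {L} _ _.
Arguments is_filter {L} _ _.
Arguments is_ultrafilter {L} _ _.

(** Elements of Z * X: a zigzag z, a point x = (v, U) of X_v with
    s(z) = v and x ∈ \hat{A(z)}. *)
Record ZX (L : LCSC) := {
  zx_z : list (Mor L * Mor L);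
  zx_v : Obj L;
  zx_U : (Mor L -> Prop) -> Prop;
  zx_zig : exists u, Zig zx_z u zx_v;
  zx_ultra : is_ultrafilter zx_v zx_U;
  zx_dom : zx_U (Adom zx_z)
}.

Arguments zx_z {_} _.
Arguments zx_v {_} _.
Arguments zx_U {_} _.

Definition sim2 (L : LCSC) (p q : ZX L) : Prop :=
  zx_v p = zx_v q /\ zx_U p = zx_U q /\
  exists E, zx_U p E /\
    forall g, E g -> forall d, Phi (zx_z p) g d <-> Phi (zx_z q) g d.

Definition G2 (L : LCSC) : Type :=
  { P : ZX L -> Prop | exists p, forall q, P q <-> sim2 p q }.

(** The basic sets [z, E], E ∈ A_{s(z)}, E ⊆ A(z). *)
Definition G2_basis {L : LCSC} (B : G2 L -> Prop) : Prop :=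
  exists z u v E, Zig z u v /\ inA v E /\ (forall g, E g -> Adom z g) /\
    forall c : G2 L, B c <->
      exists p : ZX L, zx_z p = z /\ zx_U p E /\ proj1_sig c p.

Definition open_gen {T : Type} (Bs : (T -> Prop) -> Prop) (W : T -> Prop) : Prop :=
  forall t, W t -> exists B, Bs B /\ B t /\ forall u, B u -> W u.

Definition hausdorff {T : Type} (Bs : (T -> Prop) -> Prop) : Prop :=
  forall x y : T, x <> y ->
    exists U V, open_gen Bs U /\ open_gen Bs V /\ U x /\ V y /\
      (forall t, U t -> V t -> False).

(** Push [Λ] into a groupoid by the embedding [F].  A zigzag [ζ] then acts on its
    domain as left multiplication by the groupoid element
    [g_ζ = F(α1)⁻¹ F(β1) ⋯ F(αn)⁻¹ F(βn)]: [F(φ_ζ(γ)) = g_ζ F(γ)].  Since [F] is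
    injective, two zigzag maps with the same source that agree at one point have
    the same [g_ζ] and hence agree on their whole common domain.  So a germ
    [[ζ, x]] is determined by [x] and [g_ζ], and two distinct germs are separated
    by basic sets: either their units lie in different [X_v], or they are distinct
    ultrafilters and hence contain disjoint sets of the ring, or [g_ζ ≠ g_ζ'] and
    then [[ζ, A(ζ)]] and [[ζ', A(ζ')]] have no germ in common. *)
From Stdlib Require Import List Classical FunctionalExtensionality PropExtensionality ProofIrrelevance.
Import ListNotations.

Lemma pred_ext {T : Type} {P Q : T -> Prop} : (forall t, P t <-> Q t) -> P = Q.
Proof.
  intro H; apply functional_extensionality; intro t.
  apply propositional_extensionality; auto.
Qed.

Section Ultrafilters.
Context {L : LCSC} {v : Obj L}.

Lemma inA_ext {E F : Mor L -> Prop} :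
  inA v E -> (forall g, E g <-> F g) -> inA v F.
Proof. intros HE Heq; rewrite <- (pred_ext Heq); exact HE. Qed.

Lemma inA_inter {E F : Mor L -> Prop} :
  inA v E -> inA v F -> inA v (fun g => E g /\ F g).
Proof.
  intros HE HF.
  apply (@inA_ext (fun g => E g /\ ~ (E g /\ ~ F g))).
  - now apply inA_diff; [|apply inA_diff].
  - intro g; split.
    + intros [HEg HnF]; split; [exact HEg|].
      apply NNPP; intro; apply HnF; auto.
    + intros [HEg HFg]; split; [exact HEg|]; tauto.
Qed.

Context {U : (Mor L -> Prop) -> Prop}.
Hypothesis HU : is_ultrafilter v U.

Lemma uf_inA {E} : U E -> inA v E.
Proof. destruct HU as [[H _] _]; auto. Qed.

Lemma uf_nonempty {E} : U E -> exists g, E g.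
Proof. destruct HU as [[_ [_ [H _]]] _]; auto. Qed.

Lemma uf_inter {E F} : U E -> U F -> U (fun g => E g /\ F g).
Proof. destruct HU as [[_ [_ [_ [H _]]]] _]; auto. Qed.

Lemma uf_meet {E F} : U E -> U F -> exists g, E g /\ F g.
Proof. intros HE HF; exact (uf_nonempty (uf_inter HE HF)). Qed.

Lemma uf_not_subset {U'} :
  is_ultrafilter v U' -> U <> U' -> exists E, U E /\ ~ U' E.
Proof.
  intros [HU'f _] Hne; apply NNPP; intro Hn; apply Hne.
  assert (Hsub : forall E, U E -> U' E).
  { intros E HE; apply NNPP; intro; apply Hn; eauto. }
  apply pred_ext; intro E; split; [auto|].
  destruct HU as [_ Hmax]; exact (Hmax U' HU'f Hsub E).
Qed.

Lemma is_filter_adjoin {E} :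
  inA v E -> (forall F, U F -> exists g, E g /\ F g) ->
  is_filter v (fun G => inA v G /\ exists F, U F /\ forall g, E g -> F g -> G g).
Proof.
  intros HE Hmeet.
  destruct HU as [[_ [[F0 HF0] [_ [Hint _]]]] _].
  split; [|split; [|split; [|split]]].
  - now intros G [HG _].
  - exists E; split; [exact HE|]; exists F0; auto.
  - intros G [_ [F [HF HG]]]; destruct (Hmeet F HF) as [g [HEg HFg]]; eauto.
  - intros G1 G2 [HG1 [F1 [HF1 H1]]] [HG2 [F2 [HF2 H2]]].
    split; [now apply inA_inter|].
    exists (fun g => F1 g /\ F2 g); split; [auto|].
    intros g HEg [HF1g HF2g]; auto.
  - intros G1 G2 [_ [F [HF H1]]] HG2 Hsub; split; [exact HG2|]; eauto.
Qed.

Lemma uf_disjoint_of_not_mem {E} :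
  inA v E -> ~ U E -> exists F, U F /\ forall g, E g -> F g -> False.
Proof.
  intros HE HnE; apply NNPP; intro Hn.
  assert (Hmeet : forall F, U F -> exists g, E g /\ F g).
  { intros F HF; apply NNPP; intro Hno; apply Hn; exists F; split; [exact HF|].
    intros g HEg HFg; apply Hno; eauto. }
  apply HnE; destruct HU as [[_ [[F0 HF0] _]] Hmax].
  apply (Hmax _ (is_filter_adjoin HE Hmeet)).
  - intros F HF; split; [exact (uf_inA HF)|]; eauto.
  - split; [exact HE|]; eauto.
Qed.

End Ultrafilters.

Lemma uf_separate {L : LCSC} {v} {U U' : (Mor L -> Prop) -> Prop} :
  is_ultrafilter v U -> is_ultrafilter v U' -> U <> U' ->
  exists E F, U E /\ U' F /\ forall g, E g -> F g -> False.
Proof.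
  intros HU HU' Hne.
  destruct (uf_not_subset HU HU' Hne) as [E [HE HnE]].
  destruct (uf_disjoint_of_not_mem HU' (uf_inA HU HE) HnE) as [F [HF Hdisj]].
  exists E, F; auto.
Qed.

Arguments gsrc_idm {_} _. Arguments grng_idm {_} _.
Arguments gsrc_comp {_} _ _ _. Arguments grng_comp {_} _ _ _.
Arguments gcomp_idl {_} _. Arguments gcomp_idr {_} _.
Arguments gcomp_assoc {_} _ _ _ _ _.
Arguments gsrc_inv {_} _. Arguments grng_inv {_} _.
Arguments ginv_l {_} _. Arguments ginv_r {_} _.

Section GroupoidCancellation.
Context {G : Groupoid}.

Lemma gcomp_inv_cancel_l (a x : GMor G) :
  gsrc a = grng x -> gcomp (ginv G a) (gcomp a x) = x.
Proof.
  intro H; rewrite <- gcomp_assoc by (rewrite ?gsrc_inv; auto).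
  now rewrite ginv_l, H, gcomp_idl.
Qed.

Lemma gcomp_cancel_r (k1 k2 x : GMor G) :
  gsrc k1 = grng x -> gsrc k2 = grng x -> gcomp k1 x = gcomp k2 x -> k1 = k2.
Proof.
  intros H1 H2 He.
  rewrite <- (gcomp_idr k1), <- (gcomp_idr k2), H1, H2, <- (ginv_r x).
  rewrite <- !gcomp_assoc by (rewrite ?grng_inv; auto).
  now rewrite He.
Qed.

End GroupoidCancellation.

Lemma Zig_src_unique {L : LCSC} {z u w} :
  Zig (L:=L) z u w -> forall {u' w'}, Zig z u' w' -> w = w'.
Proof.
  induction 1 as [a b Hab | a b z w Hab Hz IH]; intros u' w' H'; inversion H'; subst.
  - reflexivity.
  - match goal with H : Zig [] _ _ |- _ => inversion H end.
  - inversion Hz.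
  - eauto.
Qed.

Section Embedding.
Context {L : LCSC} {G : Groupoid} {F0 : Obj L -> GObj G} {F1 : Mor L -> GMor G}.
Hypotheses (F1_src : forall a, gsrc (F1 a) = F0 (src a))
           (F1_rng : forall a, grng (F1 a) = F0 (rng a))
           (F1_comp : forall a b, src a = rng b -> F1 (comp a b) = gcomp (F1 a) (F1 b))
           (F1_inj : forall a b, F1 a = F1 b -> a = b).

Definition zigzag_step (a b : Mor L) (k : GMor G) : GMor G :=
  gcomp (ginv G (F1 a)) (gcomp (F1 b) k).

(* The element [F(α1)⁻¹ F(β1) ⋯ F(αn)⁻¹ F(βn)]; [w] is the source of the zigzag. *)
Definition zigzag_prod (z : list (Mor L * Mor L)) (w : Obj L) : GMor G :=
  fold_right (fun ab k => zigzag_step (fst ab) (snd ab) k) (gidm (F0 w)) z.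

Lemma zigzag_step_ends a b k w :
  rng a = rng b -> gsrc k = F0 w -> grng k = F0 (src b) ->
  gsrc (zigzag_step a b k) = F0 w /\ grng (zigzag_step a b k) = F0 (src a).
Proof.
  intros Hab Hs Hr; unfold zigzag_step.
  assert (Hbk : gsrc (F1 b) = grng k) by now rewrite F1_src.
  assert (Hab' : gsrc (ginv G (F1 a)) = grng (gcomp (F1 b) k))
    by (rewrite gsrc_inv, grng_comp, !F1_rng; congruence).
  split.
  - now rewrite gsrc_comp, gsrc_comp.
  - now rewrite grng_comp, grng_inv, F1_src.
Qed.

Lemma zigzag_prod_ends {z u w} :
  Zig z u w -> gsrc (zigzag_prod z w) = F0 w /\ grng (zigzag_prod z w) = F0 u.
Proof.
  induction 1 as [a b Hab | a b z w Hab Hz [IHs IHr]]; simpl;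
    apply zigzag_step_ends; rewrite ?gsrc_idm, ?grng_idm; auto.
Qed.

Lemma zigzag_step_Phi a b k g e d :
  rng a = rng b -> grng k = F0 (src b) -> gsrc k = grng (F1 g) ->
  src b = rng e -> src a = rng d -> comp a d = comp b e ->
  F1 e = gcomp k (F1 g) -> F1 d = gcomp (zigzag_step a b k) (F1 g).
Proof.
  intros Hab Hk Hkg He Hd Hade HFe; unfold zigzag_step.
  assert (Hbk : gsrc (F1 b) = grng k) by now rewrite F1_src.
  rewrite <- (gcomp_inv_cancel_l (F1 a) (F1 d)) by now rewrite F1_src, F1_rng, Hd.
  rewrite <- F1_comp, Hade, F1_comp, HFe by assumption.
  rewrite !gcomp_assoc; auto.
  - rewrite gsrc_inv, grng_comp, !F1_rng; congruence.
  - now rewrite gsrc_comp.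
Qed.

Lemma Phi_zigzag_prod {z u w g d} :
  Zig z u w -> Phi z g d -> rng g = w /\ F1 d = gcomp (zigzag_prod z w) (F1 g).
Proof.
  intro Hz; revert g d.
  induction Hz as [a b Hab | a b z w Hab Hz IH]; intros g d [e [He [Hbe [Had Hade]]]].
  - simpl in He |- *; subst e; split; [auto|].
    apply zigzag_step_Phi with g; rewrite ?grng_idm, ?gsrc_idm, ?F1_rng, ?Hbe; auto.
    now rewrite <- F1_rng, gcomp_idl.
  - destruct (IH g e He) as [Hg HFe]; split; [exact Hg|].
    destruct (zigzag_prod_ends Hz) as [Hs Hr].
    simpl; apply zigzag_step_Phi with e; rewrite ?Hs, ?Hr, ?F1_rng, ?Hg; auto.
Qed.

Lemma zigzag_prod_eq_of_Phi {z1 u1 z2 u2 w g d} :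
  Zig z1 u1 w -> Zig z2 u2 w -> Phi z1 g d -> Phi z2 g d ->
  zigzag_prod z1 w = zigzag_prod z2 w.
Proof.
  intros Z1 Z2 P1 P2.
  destruct (Phi_zigzag_prod Z1 P1) as [Hg E1], (Phi_zigzag_prod Z2 P2) as [_ E2].
  apply (gcomp_cancel_r _ _ (F1 g)); [| |congruence].
  - now rewrite (proj1 (zigzag_prod_ends Z1)), F1_rng, Hg.
  - now rewrite (proj1 (zigzag_prod_ends Z2)), F1_rng, Hg.
Qed.

Lemma Phi_eq_of_zigzag_prod_eq {z1 u1 z2 u2 w g d1 d2} :
  Zig z1 u1 w -> Zig z2 u2 w -> zigzag_prod z1 w = zigzag_prod z2 w ->
  Phi z1 g d1 -> Phi z2 g d2 -> d1 = d2.
Proof.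
  intros Z1 Z2 HK P1 P2; apply F1_inj.
  rewrite (proj2 (Phi_zigzag_prod Z1 P1)), (proj2 (Phi_zigzag_prod Z2 P2)).
  now rewrite HK.
Qed.

End Embedding.

Arguments zigzag_step {L G} F1 a b k.
Arguments zigzag_prod {L G} F0 F1 z w.

Section G2Topology.
Context {L : LCSC}.

Lemma sim2_refl (p : ZX L) : sim2 p p.
Proof. repeat split; exists (Adom (zx_z p)); split; [apply zx_dom | tauto]. Qed.

Lemma sim2_sym {p q : ZX L} : sim2 p q -> sim2 q p.
Proof.
  intros [Hv [HU [E [HE Hagree]]]]; repeat split; auto.
  exists E; split; [now rewrite <- HU|].
  intros g Hg d; symmetry; auto.
Qed.

Lemma sim2_trans {p q r : ZX L} : sim2 p q -> sim2 q r -> sim2 p r.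
Proof.
  intros [Hv [HU [E [HE HagE]]]] [Hv' [HU' [F [HF HagF]]]].
  split; [congruence|]; split; [congruence|].
  exists (fun g => E g /\ F g); split.
  - apply (uf_inter (zx_ultra p)); [exact HE | now rewrite HU].
  - intros g [HEg HFg] d; rewrite HagE; auto.
Qed.

Lemma zx_v_of_zx_z {p q : ZX L} : zx_z p = zx_z q -> zx_v p = zx_v q.
Proof.
  intro Hz; destruct (zx_zig p) as [u Hp], (zx_zig q) as [u' Hq].
  rewrite Hz in Hp; exact (Zig_src_unique Hp Hq).
Qed.

Lemma G2_rep (x : G2 L) : exists p, proj1_sig x p.
Proof. destruct x as [P [p Hp]]; exists p; apply Hp, sim2_refl. Qed.

Lemma G2_eq_of_sim2 {x y : G2 L} {p q} :
  proj1_sig x p -> proj1_sig y q -> sim2 p q -> x = y.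
Proof.
  destruct x as [P [p0 HP]], y as [Q [q0 HQ]]; simpl; intros Hp Hq Hpq.
  apply subset_eq_compat, pred_ext; intro r; rewrite HP, HQ.
  apply HP in Hp; apply HQ in Hq.
  split; intro H.
  - apply (sim2_trans Hq), (sim2_trans (sim2_sym Hpq)), (sim2_trans (sim2_sym Hp)), H.
  - apply (sim2_trans Hp), (sim2_trans Hpq), (sim2_trans (sim2_sym Hq)), H.
Qed.

Definition basic_set (p : ZX L) (E : Mor L -> Prop) : G2 L -> Prop :=
  fun c => exists p', zx_z p' = zx_z p /\ zx_U p' E /\ proj1_sig c p'.

Lemma basic_set_open {p : ZX L} {E} :
  inA (zx_v p) E -> (forall g, E g -> Adom (zx_z p) g) ->
  open_gen (@G2_basis L) (basic_set p E).
Proof.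
  intros HE Hsub c Hc; exists (basic_set p E); split; [|split; auto].
  destruct (zx_zig p) as [u Hu].
  exists (zx_z p), u, (zx_v p), E; repeat split; auto.
Qed.

Definition separated (x y : G2 L) : Prop :=
  exists U V, open_gen (@G2_basis L) U /\ open_gen (@G2_basis L) V /\ U x /\ V y /\
    (forall t, U t -> V t -> False).

Definition basic_disjoint (p : ZX L) E (q : ZX L) F : Prop :=
  forall p' q', sim2 p' q' -> zx_z p' = zx_z p -> zx_z q' = zx_z q ->
    zx_U p' E -> zx_U q' F -> False.

Lemma separated_of_basic_disjoint {x y : G2 L} {p q E F} :
  proj1_sig x p -> proj1_sig y q -> zx_U p E -> zx_U q F ->
  (forall g, E g -> Adom (zx_z p) g) -> (forall g, F g -> Adom (zx_z q) g) ->
  basic_disjoint p E q F -> separated x y.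
Proof.
  intros Hx Hy HE HF HEdom HFdom Hdisj.
  exists (basic_set p E), (basic_set q F); repeat split.
  - exact (basic_set_open (uf_inA (zx_ultra p) HE) HEdom).
  - exact (basic_set_open (uf_inA (zx_ultra q) HF) HFdom).
  - now exists p.
  - now exists q.
  - intros [R [r Hr]] [p' [Hzp [HUp Hp']]] [q' [Hzq [HUq Hq']]]; simpl in Hp', Hq'.
    apply Hr in Hp'; apply Hr in Hq'.
    exact (Hdisj p' q' (sim2_trans (sim2_sym Hp') Hq') Hzp Hzq HUp HUq).
Qed.

Lemma separated_of_zx_v_neq {x y : G2 L} {p q} :
  proj1_sig x p -> proj1_sig y q -> zx_v p <> zx_v q -> separated x y.
Proof.
  intros Hx Hy Hv.
  apply (separated_of_basic_disjoint Hx Hy (zx_dom p) (zx_dom q)); auto.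
  intros p' q' [Hv' _] Hzp Hzq _ _; apply Hv.
  now rewrite <- (zx_v_of_zx_z Hzp), <- (zx_v_of_zx_z Hzq).
Qed.

Lemma separated_of_zx_U_neq {x y : G2 L} {p q} :
  proj1_sig x p -> proj1_sig y q -> zx_v p = zx_v q -> zx_U p <> zx_U q ->
  separated x y.
Proof.
  intros Hx Hy Hv HU.
  assert (Uq : is_ultrafilter (zx_v p) (zx_U q)) by (rewrite Hv; apply zx_ultra).
  destruct (uf_separate (zx_ultra p) Uq HU) as [E [F [HE [HF Hdisj]]]].
  apply (separated_of_basic_disjoint (E := fun g => Adom (zx_z p) g /\ E g)
           (F := fun g => Adom (zx_z q) g /\ F g) Hx Hy).
  - exact (uf_inter (zx_ultra p) (zx_dom p) HE).
  - exact (uf_inter (zx_ultra q) (zx_dom q) HF).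
  - now intros g [].
  - now intros g [].
  - intros p' q' [_ [HU' _]] _ _ HEp' HFq'; rewrite HU' in HEp'.
    destruct (uf_meet (zx_ultra q') HEp' HFq') as [g [[_ HEg] [_ HFg]]]; eauto.
Qed.

End G2Topology.

Section GermsInGroupoid.
Context {L : LCSC} {G : Groupoid} {F0 : Obj L -> GObj G} {F1 : Mor L -> GMor G}.
Hypotheses (F1_src : forall a, gsrc (F1 a) = F0 (src a))
           (F1_rng : forall a, grng (F1 a) = F0 (rng a))
           (F1_comp : forall a b, src a = rng b -> F1 (comp a b) = gcomp (F1 a) (F1 b))
           (F1_inj : forall a b, F1 a = F1 b -> a = b).

Lemma sim2_of_zigzag_prod_eq {p q : ZX L} :
  zx_v p = zx_v q -> zx_U p = zx_U q ->
  zigzag_prod F0 F1 (zx_z p) (zx_v p) = zigzag_prod F0 F1 (zx_z q) (zx_v p) ->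
  sim2 p q.
Proof.
  intros Hv HU HK; split; [exact Hv|]; split; [exact HU|].
  destruct (zx_zig p) as [up Zp], (zx_zig q) as [uq Zq]; rewrite <- Hv in Zq.
  exists (fun g => Adom (zx_z p) g /\ Adom (zx_z q) g); split.
  - apply (uf_inter (zx_ultra p) (zx_dom p)); rewrite HU; apply zx_dom.
  - intros g [[d1 P1] [d2 P2]] d; split; intro Pd.
    + now rewrite (Phi_eq_of_zigzag_prod_eq F1_src F1_rng F1_comp F1_inj Zp Zq HK Pd P2).
    + now rewrite <- (Phi_eq_of_zigzag_prod_eq F1_src F1_rng F1_comp F1_inj Zp Zq HK P1 Pd).
Qed.

Lemma separated_of_zigzag_prod_neq {x y : G2 L} {p q} :
  proj1_sig x p -> proj1_sig y q -> zx_v p = zx_v q ->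
  zigzag_prod F0 F1 (zx_z p) (zx_v p) <> zigzag_prod F0 F1 (zx_z q) (zx_v p) ->
  separated x y.
Proof.
  intros Hx Hy Hv HK.
  apply (separated_of_basic_disjoint Hx Hy (zx_dom p) (zx_dom q)); auto.
  intros p' q' [_ [HU [E [HE Hagree]]]] Hzp Hzq HAp _; rewrite Hzp, Hzq in Hagree.
  destruct (uf_meet (zx_ultra p') HE HAp) as [g [HEg [d Pd]]].
  destruct (zx_zig p) as [up Zp], (zx_zig q) as [uq Zq]; rewrite <- Hv in Zq.
  apply HK, (zigzag_prod_eq_of_Phi F1_src F1_rng F1_comp Zp Zq Pd).
  now apply Hagree.
Qed.

End GermsInGroupoid.

Theorem mainTheorem7 (L : LCSC) :
  embeds_in_groupoid L -> hausdorff (@G2_basis L).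
Proof.
  intros [G [F0 [F1 [F1_src [F1_rng [_ [F1_comp [_ F1_inj]]]]]]]] x y Hxy.
  destruct (G2_rep x) as [p Hp], (G2_rep y) as [q Hq].
  destruct (classic (zx_v p = zx_v q)) as [Hv | Hv];
    [| exact (separated_of_zx_v_neq Hp Hq Hv)].
  destruct (classic (zx_U p = zx_U q)) as [HU | HU];
    [| exact (separated_of_zx_U_neq Hp Hq Hv HU)].
  destruct (classic (zigzag_prod F0 F1 (zx_z p) (zx_v p)
                     = zigzag_prod F0 F1 (zx_z q) (zx_v p))) as [HK | HK].
  - exfalso; apply Hxy, (G2_eq_of_sim2 Hp Hq).
    exact (sim2_of_zigzag_prod_eq F1_src F1_rng F1_comp F1_inj Hv HU HK).
  - exact (separated_of_zigzag_prod_neq F1_src F1_rng F1_comp Hp Hq Hv HK).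
Qed.
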